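(* For all real numbers $a,b,c>0$, \[ \frac{a^{2}b}{(a+b)^{3}} + \frac{ac^{2}}{(a+c)^{3}} + \frac{b^{2}c}{(b+c)^{3}} \leq \frac{3}{8}. \] *)

From Stdlib Require Import Reals Lra.

(* The sum is cyclic, so we may assume that [a] is the smallest variable and
   write [b = a + p], [c = a + q] with [p, q >= 0].  Clearing denominators,
   [3/8] minus the sum becomes a polynomial in [a, p, q] whose coefficients in
   powers of [a] are nonnegative on [p, q >= 0]: all monomials are positive
   except in the coefficients of [a^6] and [a^7], which are positive binary
   forms. *)
From Stdlib Require Import Reals Lra Psatz.
Open Scope R_scope.

Definition cubic_ratio (x y : R) : R := x ^ 2 * y / (x + y) ^ 3.

Definition cyclic_sum (a b c : R) : R :=
  cubic_ratio a b + cubic_ratio b c + cubic_ratio c a.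

Lemma cyclic_sum_rotate (a b c : R) : cyclic_sum a b c = cyclic_sum b c a.
Proof. unfold cyclic_sum; lra. Qed.

Definition gap_poly (a p q : R) : R :=
  p ^ 3 * q ^ 3 * (3 * q ^ 3 + 9 * p * q ^ 2 + p ^ 2 * q + 3 * p ^ 3)
  + a * p ^ 2 * q ^ 2
      * (18 * q ^ 4 + 82 * p * q ^ 3 + 56 * p ^ 2 * q ^ 2 + 10 * p ^ 3 * q
         + 10 * p ^ 4)
  + a ^ 2 * p * q
      * (28 * q ^ 5 + 252 * p * q ^ 4 + 396 * p ^ 2 * q ^ 3
         + 84 * p ^ 3 * q ^ 2 + 36 * p ^ 4 * q + 20 * p ^ 5)
  + a ^ 3 * (16 * q ^ 6 + 288 * p * q ^ 5 + 992 * p ^ 2 * q ^ 4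
             + 576 * p ^ 3 * q ^ 3 + 48 * p ^ 4 * q ^ 2 + 128 * p ^ 5 * q
             + 16 * p ^ 6)
  + a ^ 4 * (128 * q ^ 5 + 976 * p * q ^ 4 + 1376 * p ^ 2 * q ^ 3
             + 160 * p ^ 3 * q ^ 2 + 304 * p ^ 4 * q + 128 * p ^ 5)
  + a ^ 5 * (384 * q ^ 4 + 1280 * p * q ^ 3 + 384 * p ^ 2 * q ^ 2
             + 256 * p ^ 3 * q + 384 * p ^ 4)
  + a ^ 6 * (512 * q ^ 3 + 384 * p * q ^ 2 - 128 * p ^ 2 * q + 512 * p ^ 3)
  + a ^ 7 * (256 * (q ^ 2 - p * q + p ^ 2)).

Ltac nonneg_poly :=
  repeat first [ apply pow2_ge_0 | apply Rplus_le_le_0_compat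
               | apply Rmult_le_pos | apply pow_le ];
  lra.

Lemma gap_poly_nonneg (a p q : R) :
  0 <= a -> 0 <= p -> 0 <= q -> 0 <= gap_poly a p q.
Proof.
  intros Ha Hp Hq.
  assert (coef6_nonneg : 0 <= 512 * q ^ 3 + 384 * p * q ^ 2 - 128 * p ^ 2 * q + 512 * p ^ 3).
  { assert (0 <= p * (8 * (8 * p - q) ^ 2 + 376 * q ^ 2) + 512 * q ^ 3)
      by nonneg_poly.
    nra. }
  assert (coef7_nonneg : 0 <= 256 * (q ^ 2 - p * q + p ^ 2)) by nra.
  unfold gap_poly.
  repeat apply Rplus_le_le_0_compat;
    try (apply Rmult_le_pos; [apply pow_le; exact Ha | assumption]);
    nonneg_poly.
Qed.

Lemma cyclic_sum_gap (a p q : R) :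
  0 < a -> 0 <= p -> 0 <= q ->
  3 / 8 - cyclic_sum a (a + p) (a + q)
  = gap_poly a p q
    / (8 * ((a + (a + p)) ^ 3 * ((a + p) + (a + q)) ^ 3 * ((a + q) + a) ^ 3)).
Proof.
  intros Ha Hp Hq.
  unfold cyclic_sum, cubic_ratio, gap_poly.
  field; lra.
Qed.

Lemma cyclic_sum_le_of_min (a b c : R) :
  0 < a -> a <= b -> a <= c -> cyclic_sum a b c <= 3 / 8.
Proof.
  intros Ha Hab Hac.
  replace b with (a + (b - a)) by ring.
  replace c with (a + (c - a)) by ring.
  enough (0 <= 3 / 8 - cyclic_sum a (a + (b - a)) (a + (c - a))) by lra.
  rewrite cyclic_sum_gap by lra.
  apply Rmult_le_pos.
  - apply gap_poly_nonneg; lra.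
  - left; apply Rinv_0_lt_compat, Rmult_lt_0_compat; [lra |].
    repeat first [apply pow_lt; lra | apply Rmult_lt_0_compat].
Qed.

Lemma cyclic_sum_le (a b c : R) :
  0 < a -> 0 < b -> 0 < c -> cyclic_sum a b c <= 3 / 8.
Proof.
  intros Ha Hb Hc.
  pose proof (cyclic_sum_rotate a b c).
  pose proof (cyclic_sum_rotate b c a).
  destruct (Rle_dec a b), (Rle_dec a c), (Rle_dec b c).
  all: first
    [ apply cyclic_sum_le_of_min; lra
    | pose proof (cyclic_sum_le_of_min b c a Hb ltac:(lra) ltac:(lra)); lra
    | pose proof (cyclic_sum_le_of_min c a b Hc ltac:(lra) ltac:(lra)); lra ].
Qed.

Theorem mainTheorem9 (a b c : R) (ha : 0 < a) (hb : 0 < b) (hc : 0 < c) :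
  a ^ 2 * b / (a + b) ^ 3 + a * c ^ 2 / (a + c) ^ 3 + b ^ 2 * c / (b + c) ^ 3
  <= 3 / 8.
Proof.
  assert (Hsum := cyclic_sum_le a b c ha hb hc).
  unfold cyclic_sum, cubic_ratio in Hsum.
  rewrite (Rplus_comm c a), (Rmult_comm (c ^ 2) a) in Hsum.
  lra.
Qed.
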